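(* Let $S$ be an $E$-solid locally inverse semigroup, $\rho$ an inverse semigroup congruence on $S$ whose idempotent classes are completely simple subsemigroups, $T=S/\rho$, and $\mathcal C$ the derived semigroupoid. For every arrow $a$ of $\mathcal C$ there is a unique stable arrow $b$ of $\mathcal C$ with $b\le a$.
   Context: The derived semigroupoid $\mathcal C$ has object set $T$ and arrows $\mathcal C(\alpha,\beta)=\{(\alpha,s,\beta)\in T\times S\times T:\alpha\cdot s\rho=\beta,\ \beta\cdot(s\rho)^{-1}=\alpha\}$, composition $(\alpha,s,\beta)\circ(\beta,t,\gamma)=(\alpha,st,\gamma)$. An arrow $(\alpha,s,\beta)$ is stable if $s\rho=\alpha^{-1}\beta$. The natural partial order on $\mathcal C$: $(\alpha,s,\beta)\le(\gamma,t,\delta)$ iff $\alpha=\gamma$, $\beta=\delta$ and $s\le t$ in the natural partial order of $S$ ($s\le t$ iff $s=et=tf$ for some idempotents $e,f$). Locally inverse: regular with every $eSe$ inverse; $E$-solid: idempotent-generated subsemigroup completely regular. *)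

From Stdlib Require Import ClassicalEpsilon.

Set Implicit Arguments.

Section Semigroups.
Variable S : Type.
Variable mul : S -> S -> S.
Local Infix "*" := mul.

Definition associative_op := forall x y z, x * (y * z) = (x * y) * z.

Definition idempotent (e : S) := e * e = e.

Definition is_inverse_of (x u : S) := x * u * x = x /\ u * x * u = u.

Definition regular := forall x, exists u, is_inverse_of x u.

Definition inverse_semigroup :=
  regular /\ forall e f, idempotent e -> idempotent f -> e * f = f * e.

(* the (unique, in an inverse semigroup) inverse x^{-1}, chosen by epsilon *)
Definition inv (x : S) : S :=
  epsilon (inhabits x) (fun u => is_inverse_of x u).

Definition nat_le (s t : S) :=
  exists e f, idempotent e /\ idempotent f /\ s = e * t /\ s = t * f.

Definition closed (A : S -> Prop) := forall a b, A a -> A b -> A (a * b).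

Definition inverse_sub (A : S -> Prop) :=
  closed A /\
  (forall a, A a -> exists u, A u /\ is_inverse_of a u) /\
  (forall e f, A e -> A f -> idempotent e -> idempotent f -> e * f = f * e).

Definition local_sub (e : S) : S -> Prop := fun x => exists s, x = e * s * e.

Definition locally_inverse :=
  regular /\ forall e, idempotent e -> inverse_sub (local_sub e).

Inductive idem_gen : S -> Prop :=
  | idem_gen_e : forall e, idempotent e -> idem_gen e
  | idem_gen_mul : forall a b, idem_gen a -> idem_gen b -> idem_gen (a * b).

(* A (a subsemigroup) is completely regular: every element lies in a
   subgroup, i.e. has an inverse in A commuting with it *)
Definition completely_regular_sub (A : S -> Prop) :=
  forall a, A a -> exists u, A u /\ is_inverse_of a u /\ a * u = u * a.

Definition E_solid := completely_regular_sub idem_gen.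

(* A (a subsemigroup) is simple: no proper two-sided ideals, i.e.
   every a lies in the principal ideal A^1 b A^1 of every b *)
Definition simple_sub (A : S -> Prop) :=
  forall a b, A a -> A b ->
    a = b \/ (exists x, A x /\ a = x * b) \/ (exists y, A y /\ a = b * y)
    \/ (exists x y, A x /\ A y /\ a = x * b * y).

(* e is a primitive idempotent of A (A has no zero here: minimal idempotent) *)
Definition primitive_in (A : S -> Prop) (e : S) :=
  A e /\ idempotent e /\
  forall f, A f -> idempotent f -> f = e * f -> f = f * e -> f = e.

Definition completely_simple_sub (A : S -> Prop) :=
  closed A /\ (exists a, A a) /\ simple_sub A /\ exists e, primitive_in A e.

End Semigroups.

Section Derived.
(* S with a surjective homomorphism phi onto T = S/rho, rho = ker phi *)
Variables (S T : Type) (mulS : S -> S -> S) (mulT : T -> T -> T) (phi : S -> T).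

(* arrows (alpha, s, beta) of the derived semigroupoid C(alpha, beta) *)
Definition is_arrow (alpha : T) (s : S) (beta : T) :=
  mulT alpha (phi s) = beta /\ mulT beta (inv mulT (phi s)) = alpha.

Definition stable_arrow (alpha : T) (s : S) (beta : T) :=
  phi s = mulT (inv mulT alpha) beta.

Definition arrow_le (a1 : T * S * T) (a2 : T * S * T) :=
  let '(al1, s1, be1) := a1 in let '(al2, s2, be2) := a2 in
  al1 = al2 /\ be1 = be2 /\ nat_le mulS s1 s2.

End Derived.

From Stdlib Require Import ClassicalEpsilon.
Set Implicit Arguments.

(** Let (alpha, s, beta) be an arrow, fix an inverse s' of s and put
    g = s s'.  Every t <= s factors as t = f s with f = t s' an idempotent
    of the local submonoid gSg, which is an inverse semigroup.  Existence:
    lift the idempotent (alpha^-1 alpha)(g rho) <= g rho of T to an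
    idempotent f of gSg (take a preimage k, an inverse m' of m = gkg inside
    gSg, and f = m m'); then t = f s lies below s and t rho = alpha^-1 beta.
    Uniqueness: the idempotents t1 s', t2 s' of gSg commute and lie in one
    rho-class, which is completely simple; their product lies below both,
    and idempotents of a completely simple semigroup are pairwise
    incomparable. *)

Ltac regroup assoc t := transitivity t; [rewrite !assoc; reflexivity |].

Section Semigroup.
Variables (S : Type) (mul : S -> S -> S).
Hypothesis assoc : associative_op mul.
Local Infix "*" := mul.

Lemma is_inverse_idempotent_l x u : is_inverse_of mul x u -> idempotent mul (u * x).
Proof. intros [_ Hu]. unfold idempotent. rewrite assoc, Hu. reflexivity. Qed.

Lemma is_inverse_idempotent_r x u : is_inverse_of mul x u -> idempotent mul (x * u).
Proof. intros [Hx _]. unfold idempotent. rewrite assoc, Hx. reflexivity. Qed.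

Lemma nat_le_inverse_factor t s s' :
  is_inverse_of mul s s' -> nat_le mul t s ->
  t = t * s' * s /\ idempotent mul (t * s') /\ local_sub mul (s * s') (t * s').
Proof.
  intros [Hs Hs'] [e [h [He [Hh [Hte Hth]]]]].
  assert (Hts : t * s' * s = t).
  { rewrite Hte, <- !assoc, (assoc s s' s), Hs. reflexivity. }
  assert (Hst : s * s' * t = t).
  { rewrite Hth, !assoc, Hs. reflexivity. }
  assert (Htst : t * s' * t = t).
  { rewrite Hth at 2. rewrite assoc, Hts, Hth, <- assoc, Hh. reflexivity. }
  split; [symmetry; exact Hts | split].
  - unfold idempotent. rewrite assoc, Htst. reflexivity.
  - exists (t * s'). rewrite !assoc, Hst, <- (assoc t s' s), <- assoc, Hs'. reflexivity.
Qed.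

Lemma completely_simple_idempotent_primitive (K : S -> Prop) f k :
  completely_simple_sub mul K -> K f -> K k ->
  idempotent mul k -> k = k * f -> k = f * k -> k = f.
Proof.
  intros [Hcl [_ [Hsimp [e [Ke [He Hprim]]]]]] Kf Kk Hk Hkf Hfk.
  unfold idempotent in *.
  assert (Hfe : exists u v, K u /\ K v /\ f = u * e * v).
  { destruct (Hsimp f e Kf Ke)
      as [-> | [[x [Kx ->]] | [[y [Ky ->]] | [x [y [Kx [Ky ->]]]]]]].
    - exists e, e. rewrite !He. auto.
    - exists x, e. rewrite <- assoc, He. auto.
    - exists e, y. rewrite He. auto.
    - exists x, y. auto. }
  destruct Hfe as [u [v [Ku [Kv Hfuv]]]].
  (* as f = u e v and k f k = k, g is an idempotent of K below e, so g = e *)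
  set (g := e * v * k * u * e).
  assert (Hg : g * g = g).
  { unfold g. transitivity (e * v * k * (u * e * v) * k * u * e).
    - rewrite !assoc, <- (assoc _ e e), He. reflexivity.
    - rewrite <- Hfuv, <- (assoc _ f k), <- Hfk, <- (assoc _ k k), Hk. reflexivity. }
  assert (Hge : g = e).
  { apply Hprim.
    - unfold g. repeat apply Hcl; assumption.
    - exact Hg.
    - unfold g. rewrite !assoc, He. reflexivity.
    - unfold g. rewrite <- (assoc _ e e), He. reflexivity. }
  transitivity (f * k * f).
  - rewrite <- Hfk, <- Hkf. reflexivity.
  - transitivity (u * g * v).
    + unfold g. rewrite Hfuv, !assoc. reflexivity.
    + rewrite Hge. symmetry. exact Hfuv.
Qed.

Lemma inverse_sub_completely_simple_idempotent_eq (A K : S -> Prop) f1 f2 :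
  inverse_sub mul A -> completely_simple_sub mul K ->
  A f1 -> A f2 -> K f1 -> K f2 -> idempotent mul f1 -> idempotent mul f2 ->
  f1 = f2.
Proof.
  intros [_ [_ Hcomm]] HK A1 A2 K1 K2 I1 I2.
  assert (Hc : f1 * f2 = f2 * f1) by (apply Hcomm; assumption).
  pose proof HK as [HclK _].
  unfold idempotent in I1, I2.
  assert (Ih : idempotent mul (f1 * f2)).
  { unfold idempotent. rewrite assoc, <- (assoc f1 f2 f1), <- Hc, assoc, I1, <- assoc, I2.
    reflexivity. }
  assert (Kh : K (f1 * f2)) by (apply HclK; assumption).
  transitivity (f1 * f2).
  - symmetry. apply (completely_simple_idempotent_primitive HK); try assumption.
    + rewrite <- assoc, <- Hc, assoc, I1. reflexivity.
    + rewrite assoc, I1. reflexivity.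
  - apply (completely_simple_idempotent_primitive HK); try assumption.
    + rewrite <- assoc, I2. reflexivity.
    + rewrite assoc, <- Hc, <- assoc, I2. reflexivity.
Qed.
End Semigroup.

Section InverseSemigroup.
Variables (T : Type) (mul : T -> T -> T).
Hypotheses (assoc : associative_op mul) (Hinv : inverse_semigroup mul).
Local Infix "*" := mul.

Lemma inv_spec x : is_inverse_of mul x (inv mul x).
Proof. unfold inv. apply epsilon_spec, (proj1 Hinv). Qed.

Lemma idempotent_mul e f :
  idempotent mul e -> idempotent mul f -> idempotent mul (e * f).
Proof.
  intros He Hf. unfold idempotent.
  rewrite assoc, <- (assoc e f e), <- (proj2 Hinv e f He Hf), assoc, He, <- assoc, Hf.
  reflexivity.
Qed.

Lemma inverse_unique x u v : is_inverse_of mul x u -> is_inverse_of mul x v -> u = v.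
Proof.
  intros Hu Hv. pose proof Hu as [Hxu Hux]. pose proof Hv as [Hxv Hvx].
  assert (Hcomm := proj2 Hinv).
  assert (Eu : u = v * x * u).
  { transitivity (u * (x * v * x) * u); [rewrite Hxv; symmetry; exact Hux |].
    regroup assoc (u * x * (v * x) * u).
    rewrite (Hcomm (u * x) (v * x))
      by (apply (is_inverse_idempotent_l assoc); assumption).
    regroup assoc (v * x * (u * x * u)). rewrite Hux. reflexivity. }
  assert (Ev : v = v * x * u).
  { transitivity (v * (x * u * x) * v); [rewrite Hxu; symmetry; exact Hvx |].
    regroup assoc (v * (x * u * (x * v))).
    rewrite (Hcomm (x * u) (x * v))
      by (apply (is_inverse_idempotent_r assoc); assumption).
    regroup assoc (v * x * v * x * u). rewrite Hvx. reflexivity. }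
  congruence.
Qed.

Lemma inv_eq x u : is_inverse_of mul x u -> inv mul x = u.
Proof. apply inverse_unique, inv_spec. Qed.

Lemma inv_inv x : inv mul (inv mul x) = x.
Proof. apply inv_eq. destruct (inv_spec x) as [H1 H2]. split; assumption. Qed.

Lemma inv_mul x y : inv mul (x * y) = inv mul y * inv mul x.
Proof.
  apply inv_eq.
  destruct (inv_spec x) as [Hx Hx']. destruct (inv_spec y) as [Hy Hy'].
  set (x' := inv mul x) in *. set (y' := inv mul y) in *.
  assert (Hcomm : x' * x * (y * y') = y * y' * (x' * x)).
  { apply (proj2 Hinv);
      [apply (is_inverse_idempotent_l assoc) | apply (is_inverse_idempotent_r assoc)];
      split; assumption. }
  split.
  - regroup assoc (x * (y * y' * (x' * x)) * y). rewrite <- Hcomm.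
    regroup assoc (x * x' * x * (y * y' * y)). rewrite Hx, Hy. reflexivity.
  - regroup assoc (y' * (x' * x * (y * y')) * x'). rewrite Hcomm.
    regroup assoc (y' * y * y' * (x' * x * x')). rewrite Hx', Hy'. reflexivity.
Qed.
End InverseSemigroup.

Section DerivedSemigroupoid.
Variables (S T : Type) (mulS : S -> S -> S) (mulT : T -> T -> T) (phi : S -> T).
Hypotheses (assocS : associative_op mulS) (assocT : associative_op mulT).
Hypothesis phi_hom : forall x y, phi (mulS x y) = mulT (phi x) (phi y).
Hypothesis phi_surj : forall t, exists s, phi s = t.
Hypothesis Hli : locally_inverse mulS.
Hypothesis Hinv : inverse_semigroup mulT.
Hypothesis Hcs : forall e, idempotent mulT e ->
  completely_simple_sub mulS (fun x => phi x = e).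
Local Infix "*" := mulS.
Local Infix "·" := mulT (at level 40, left associativity).

Lemma idempotent_phi e : idempotent mulS e -> idempotent mulT (phi e).
Proof. intro He. unfold idempotent. rewrite <- phi_hom, He. reflexivity. Qed.

Lemma stable_is_arrow alpha s t beta :
  is_arrow mulT phi alpha s beta -> stable_arrow mulT phi alpha t beta ->
  is_arrow mulT phi alpha t beta.
Proof.
  unfold is_arrow, stable_arrow. intros [Hab Hba] ->.
  destruct (inv_spec Hinv alpha) as [Ha _]. destruct (inv_spec Hinv beta) as [Hb _].
  split.
  - rewrite <- Hab, !assocT, Ha. reflexivity.
  - rewrite (inv_mul assocT Hinv), (inv_inv assocT Hinv), <- Hba, !assocT, Hb.
    reflexivity.
Qed.

Lemma lift_idempotent_local g eps :
  idempotent mulS g -> inverse_sub mulS (local_sub mulS g) ->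
  idempotent mulT eps -> eps · phi g = eps ->
  exists f, idempotent mulS f /\ g * f = f /\ f * g = f /\ phi f = eps.
Proof.
  intros Hg [_ [Hloc _]] He Heg.
  assert (Hge : phi g · eps = eps).
  { rewrite (proj2 Hinv _ _ (idempotent_phi Hg) He). exact Heg. }
  destruct (phi_surj eps) as [k Hk].
  set (m := g * k * g).
  assert (Hm : phi m = eps) by (unfold m; rewrite !phi_hom, Hk, Hge, Heg; reflexivity).
  destruct (Hloc m (ex_intro _ k eq_refl)) as [w [[y Hw] Hmw]].
  assert (Hpw : phi w = eps).
  { apply (inverse_unique assocT Hinv (x := eps)).
    - destruct Hmw as [H1 H2].
      split; rewrite <- Hm, <- !phi_hom; [rewrite H1 | rewrite H2]; reflexivity.
    - split; rewrite !He; reflexivity. }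
  unfold idempotent in Hg.
  exists (m * w). split; [| split; [| split]].
  - exact (is_inverse_idempotent_r assocS Hmw).
  - unfold m. rewrite !assocS, Hg. reflexivity.
  - rewrite Hw, !assocS, <- (assocS _ g g), Hg. reflexivity.
  - rewrite phi_hom, Hm, Hpw. exact He.
Qed.

Lemma stable_below_exists alpha s beta :
  alpha · phi s = beta -> exists t, nat_le mulS t s /\ phi t = inv mulT alpha · beta.
Proof.
  intros Hab. destruct Hli as [HregS Hloc].
  destruct (HregS s) as [s' Hs]. pose proof Hs as [Hss _].
  pose proof (is_inverse_idempotent_r assocS Hs) as Hg.
  assert (Ha : idempotent mulT (inv mulT alpha · alpha))
    by exact (is_inverse_idempotent_l assocT (inv_spec Hinv alpha)).
  destruct (lift_idempotent_local (eps := inv mulT alpha · alpha · phi (s * s'))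
              Hg (Hloc _ Hg)) as [f [Hf [Hgf [Hfg Hpf]]]].
  - exact (idempotent_mul assocT Hinv Ha (idempotent_phi Hg)).
  - rewrite <- assocT, <- phi_hom, Hg. reflexivity.
  - exists (f * s). split.
    + exists f, (s' * f * s). split; [exact Hf | split; [| split; [reflexivity |]]].
      * unfold idempotent. regroup assocS (s' * (f * (s * s') * f) * s).
        rewrite Hfg, Hf. reflexivity.
      * rewrite !assocS, Hgf. reflexivity.
    + rewrite phi_hom, Hpf, <- Hab, <- (assocT _ (phi (s * s'))), <- phi_hom, Hss.
      rewrite assocT. reflexivity.
Qed.

Lemma nat_le_phi_inj t1 t2 s :
  nat_le mulS t1 s -> nat_le mulS t2 s -> phi t1 = phi t2 -> t1 = t2.
Proof.
  intros H1 H2 Hp. destruct Hli as [HregS Hloc]. destruct (HregS s) as [s' Hs].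
  destruct (nat_le_inverse_factor assocS Hs H1) as [E1 [I1 L1]].
  destruct (nat_le_inverse_factor assocS Hs H2) as [E2 [I2 L2]].
  assert (Hf : t1 * s' = t2 * s').
  { apply (inverse_sub_completely_simple_idempotent_eq assocS
             (Hloc _ (is_inverse_idempotent_r assocS Hs)) (Hcs (idempotent_phi I1)));
      try assumption.
    - reflexivity.
    - rewrite !phi_hom, Hp. reflexivity. }
  rewrite E1, E2, Hf. reflexivity.
Qed.
End DerivedSemigroupoid.

Theorem lemma5p3
  (S T : Type) (mulS : S -> S -> S) (mulT : T -> T -> T) (phi : S -> T)
  (assocS : associative_op mulS) (assocT : associative_op mulT)
  (phi_hom : forall x y, phi (mulS x y) = mulT (phi x) (phi y))
  (phi_surj : forall t, exists s, phi s = t)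
  (Hli : locally_inverse mulS)
  (Hsolid : E_solid mulS)
  (Hinv : inverse_semigroup mulT)
  (Hcs : forall e, idempotent mulT e ->
           completely_simple_sub mulS (fun x => phi x = e)) :
  forall (alpha : T) (s : S) (beta : T),
    is_arrow mulT phi alpha s beta ->
    exists t : S,
      is_arrow mulT phi alpha t beta /\ stable_arrow mulT phi alpha t beta /\
      arrow_le mulS (alpha, t, beta) (alpha, s, beta) /\
      forall (alpha' : T) (t' : S) (beta' : T),
        is_arrow mulT phi alpha' t' beta' ->
        stable_arrow mulT phi alpha' t' beta' ->
        arrow_le mulS (alpha', t', beta') (alpha, s, beta) ->
        (alpha', t', beta') = (alpha, t, beta).
Proof.
  intros alpha s beta Harr.
  destruct (stable_below_exists phi assocS assocT phi_hom phi_surj Hli Hinv alpha s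
              (proj1 Harr)) as [t [Hle Hst]].
  exists t. split; [| split; [| split]].
  - exact (stable_is_arrow assocT Hinv Harr Hst).
  - exact Hst.
  - repeat split. exact Hle.
  - intros alpha' t' beta' _ Hst' [-> [-> Hle']]. do 2 f_equal.
    apply (nat_le_phi_inj phi assocS phi_hom Hli Hcs Hle' Hle).
    unfold stable_arrow in Hst, Hst'. congruence.
Qed.
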